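(* Let $\psi$ be the four-taxon network described in the context, with $w=0$ and $\gamma=1/2$, and one gene copy per taxon. In the limit $x\to\infty$, the limiting probabilities of the gene tree topologies $((a,b),(c,d))$ and $((a,c),(b,d))$ (both equal to $\tfrac14 e^{-y}$) exceed the limiting probabilities of each of the two trees displayed by $\psi$, namely $((a,(b,c)),d)$ and $(a,((b,c),d))$ (both equal to $\tfrac12-\tfrac{5}{12}e^{-y}$), if and only if $y<\ln(4/3)\approx 0.288$. Consequently, for such $y$ (and all sufficiently large $x$) the most likely gene tree topology is not a tree displayed by $\psi$.
   Context: The network $\psi$ on taxa $A,B,C,D$ (gene copies $a,b,c,d$): the root $r$ has two children $p$ and $q$, with edges $(r,p)$ and $(r,q)$ both of length $x$. Node $p$ has children the leaf $A$ and a reticulation node $h$; node $q$ has children the leaf $D$ and $h$. The reticulation edges $(p,h)$ and $(q,h)$ have length $w=0$ and inheritance probabilities $\gamma$ and $1-\gamma$ respectively. Node $h$ has a single child $m$ via an edge of length $y>0$, and $m$ has the two leaf children $B$ and $C$. A tree is displayed by a network if it is obtained by deleting, for each reticulation node, one of its two incoming edges and then suppressing nodes of in-degree 1 and out-degree 1; here the displayed trees are $((A,(B,C)),D)$ and $(A,((B,C),D))$. Multispecies network coalescent: gene lineages are traced backward in time from the leaves; within each branch every pair of lineages present coalesces independently at rate 1 per coalescent unit for the branch's duration; when a lineage reaches a reticulation node it independently enters the incoming edge $b$ with probability equal to its inheritance probability; above the root all remaining lineages coalesce. Probabilities of gene tree topologies are with respect to this process. *)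

From Stdlib Require Import Reals Lra List Arith.
Import ListNotations.
Open Scope R_scope.

Inductive taxon := ga | gb | gc | gd.

Definition taxon_eqb (s t : taxon) : bool :=
  match s, t with
  | ga, ga | gb, gb | gc, gc | gd, gd => true
  | _, _ => false
  end.

(* rooted binary gene trees (a lineage carries the subtree below it) *)
Inductive gtree := Leaf (t : taxon) | Node (l r : gtree).

Fixpoint teqb (T U : gtree) : bool :=
  match T, U with
  | Leaf s, Leaf t => taxon_eqb s t
  | Node l1 r1, Node l2 r2 =>
      (teqb l1 l2 && teqb r1 r2) || (teqb l1 r2 && teqb r1 l2)
  | _, _ => false
  end.

Definition dist (A : Type) := list (R * A).

Definition bind {A B : Type} (d : dist A) (f : A -> dist B) : dist B :=
  flat_map (fun p => map (fun q => (fst p * fst q, snd q)) (f (snd p))) d.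

Definition rise (a k : nat) : R := fold_right Rmult 1 (map (fun l => INR (a + l)) (seq 0 k)).
Definition fall (a k : nat) : R := fold_right Rmult 1 (map (fun l => INR a - INR l) (seq 0 k)).

(* Tavare's formula: probability that i lineages become exactly j (1 <= j <= i)
   lineages in time t under Kingman's coalescent (pairwise rate 1). *)
Definition g (i j : nat) (t : R) : R :=
  fold_right Rplus 0
    (map (fun k => exp (- (INR k * (INR k - 1) / 2) * t) * (2 * INR k - 1)
                   * (-1) ^ (k - j) * rise j (k - 1) * fall i k
                   / (INR (fact j) * INR (fact (k - j)) * rise i k))
         (seq j (i - j + 1))).

Definition pairs (n : nat) : list (nat * nat) :=
  flat_map (fun j => map (fun i => (i, j)) (seq 0 j)) (seq 0 n).

Fixpoint remove_at {A : Type} (n : nat) (l : list A) : list A :=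
  match n, l with
  | _, [] => []
  | O, _ :: l' => l'
  | S n', x :: l' => x :: remove_at n' l'
  end.

Definition merge_at (i j : nat) (L : list gtree) : list gtree :=
  match L with
  | [] => []
  | x0 :: _ => Node (nth i L x0) (nth j L x0) :: remove_at i (remove_at j L)
  end.

Fixpoint merges (m : nat) (L : list gtree) : dist (list gtree) :=
  match m with
  | O => [(1, L)]
  | S m' =>
      let k := length L in
      flat_map (fun ij =>
        map (fun q => (2 / INR (k * (k - 1)) * fst q, snd q))
            (merges m' (merge_at (fst ij) (snd ij) L)))
        (pairs k)
  end.

Definition branch (t : R) (L : list gtree) : dist (list gtree) :=
  match length L with
  | O => [(1, L)]
  | k => flat_map (fun m => map (fun q => (g k (k - m) t * fst q, snd q)) (merges m L))
                  (seq 0 k)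
  end.

(* above the root: all remaining lineages coalesce *)
Definition root_dist (L : list gtree) : dist gtree :=
  bind (merges (length L - 1) L)
       (fun L' => match L' with [T] => [(1, T)] | _ => [] end).

(* at a reticulation node each lineage independently goes to the first parent
   with probability gam, to the second with probability 1-gam *)
Fixpoint split (gam : R) (L : list gtree) : dist (list gtree * list gtree) :=
  match L with
  | [] => [(1, ([], []))]
  | T :: L' =>
      flat_map (fun p =>
        [(gam * fst p, (T :: fst (snd p), snd (snd p)));
         ((1 - gam) * fst p, (fst (snd p), T :: snd (snd p)))]) (split gam L')
  end.

(** * The network psi and its multispecies network coalescent
    (one gene copy per taxon; leaf edges carry a single lineage so their
    lengths are irrelevant). *)
Definition psi_dist (x y w gam : R) : dist gtree :=
  bind (branch y [Leaf gb; Leaf gc]) (fun L1 =>            (* edge (h,m), length y *)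
  bind (split gam L1) (fun LL =>                           (* reticulation h *)
  bind (branch w (fst LL)) (fun Lp =>                      (* edge (p,h), length w *)
  bind (branch w (snd LL)) (fun Lq =>                      (* edge (q,h), length w *)
  bind (branch x (Leaf ga :: Lp)) (fun Lp' =>              (* edge (r,p), length x *)
  bind (branch x (Leaf gd :: Lq)) (fun Lq' =>              (* edge (r,q), length x *)
  root_dist (Lp' ++ Lq'))))))).

Definition gt_prob (x y w gam : R) (T : gtree) : R :=
  fold_right Rplus 0
    (map (fun p => if teqb (snd p) T then fst p else 0) (psi_dist x y w gam)).

Definition lim_infty (f : R -> R) (l : R) : Prop :=
  forall eps, eps > 0 -> exists M, forall x, x > M -> Rabs (f x - l) < eps.

Definition T_ab_cd := Node (Node (Leaf ga) (Leaf gb)) (Node (Leaf gc) (Leaf gd)).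
Definition T_ac_bd := Node (Node (Leaf ga) (Leaf gc)) (Node (Leaf gb) (Leaf gd)).
Definition D1 := Node (Node (Leaf ga) (Node (Leaf gb) (Leaf gc))) (Leaf gd).
Definition D2 := Node (Leaf ga) (Node (Node (Leaf gb) (Leaf gc)) (Leaf gd)).

(* the trees displayed by psi: ((A,(B,C)),D) (delete (q,h)) and
   (A,((B,C),D)) (delete (p,h)), as gene tree topologies *)
Definition displayed_by_psi (T : gtree) : Prop :=
  teqb T D1 = true \/ teqb T D2 = true.

(* With one gene copy per taxon, w = 0 and gamma = 1/2, the network coalescent on psi is a
   finite mixture, and evaluating it with Tavare's formula for at most three lineages shows
   that every topology probability is a polynomial in e = exp (-x) whose coefficients
   involve exp (-y).  Letting x -> oo sends e to 0, giving the limits.  The balanced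
   topologies then beat the displayed ones exactly when exp (-y) > 3/4, i.e. y < ln (4/3),
   and for such y the strict inequality between the limits persists for all large x. *)

From Pilot Require Import Defs.
From Stdlib Require Import Reals Lra List Bool.
Open Scope R_scope.

Lemma lim_infty_exp_neg (p : R -> R) (f : R -> R) :
  continuity_pt p 0 -> (forall x, f x = p (exp (- x))) -> lim_infty f (p 0).
Proof.
  intros Hp Hf eps Heps.
  destruct (Hp eps Heps) as [delta [Hdelta Hclose]].
  exists (- ln delta). intros x Hx.
  assert (Hsmall : 0 < exp (- x) < delta).
  { split; [apply exp_pos |].
    rewrite <- (exp_ln delta Hdelta). apply exp_increasing. lra. }
  rewrite Hf. apply (Hclose (exp (- x))).
  split.
  - split; [exact I | lra].
  - simpl. unfold R_dist. rewrite Rminus_0_r, Rabs_pos_eq; lra.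
Qed.

Lemma lim_infty_eventually_lt (f h : R -> R) (a b : R) :
  lim_infty f a -> lim_infty h b -> b < a ->
  exists M, forall x, x > M -> h x < f x.
Proof.
  intros Hf Hh Hba.
  assert (Hgap : (a - b) / 2 > 0) by lra.
  destruct (Hf _ Hgap) as [Mf HMf]. destruct (Hh _ Hgap) as [Mh HMh].
  exists (Rmax Mf Mh). intros x Hx.
  specialize (HMf x (Rle_lt_trans _ _ _ (Rmax_l Mf Mh) Hx)).
  specialize (HMh x (Rle_lt_trans _ _ _ (Rmax_r Mf Mh) Hx)).
  apply Rabs_def2 in HMf. apply Rabs_def2 in HMh. lra.
Qed.

Lemma lt_ln_iff (y c : R) : 0 < c -> y < ln c <-> exp y < c.
Proof.
  intros Hc. split; intros H.
  - rewrite <- (exp_ln c Hc). now apply exp_increasing.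
  - rewrite <- (ln_exp y). now apply ln_increasing; [apply exp_pos |].
Qed.

Lemma taxon_eqb_sym (s t : taxon) : taxon_eqb s t = taxon_eqb t s.
Proof. destruct s, t; reflexivity. Qed.

Lemma taxon_eqb_trans (s t u : taxon) :
  taxon_eqb s t = true -> taxon_eqb t u = true -> taxon_eqb s u = true.
Proof. destruct s, t, u; simpl; congruence. Qed.

Lemma teqb_sym (T U : gtree) : teqb T U = teqb U T.
Proof.
  revert U; induction T as [s | l1 IHl r1 IHr]; intros [t | l2 r2]; simpl; auto.
  - apply taxon_eqb_sym.
  - rewrite (IHl l2), (IHr r2), (IHl r2), (IHr l2).
    destruct (teqb l2 l1), (teqb r2 r1), (teqb r2 l1), (teqb l2 r1); reflexivity.
Qed.

Lemma teqb_trans (T U V : gtree) :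
  teqb T U = true -> teqb U V = true -> teqb T V = true.
Proof.
  revert U V; induction T as [s | l1 IHl r1 IHr];
    intros [t | l2 r2] [u | l3 r3] HTU HUV; simpl in *; try discriminate.
  - eapply taxon_eqb_trans; eauto.
  - apply orb_true_iff in HTU, HUV. apply orb_true_iff.
    destruct HTU as [HTU | HTU], HUV as [HUV | HUV];
      apply andb_true_iff in HTU as [H1 H2]; apply andb_true_iff in HUV as [H3 H4];
      [left | right | right | left]; apply andb_true_iff; split; eauto.
Qed.

Lemma teqb_congr_r (T U V : gtree) : teqb T U = true -> teqb V T = teqb V U.
Proof.
  intros HTU. destruct (teqb V U) eqn:HVU.
  - rewrite teqb_sym in HTU. eapply teqb_trans; eauto.
  - destruct (teqb V T) eqn:HVT; [| reflexivity].
    rewrite <- HVU. symmetry. eapply teqb_trans; eauto.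
Qed.

Lemma gt_prob_teqb (x y w gam : R) (T U : gtree) :
  teqb T U = true -> gt_prob x y w gam T = gt_prob x y w gam U.
Proof.
  intros HTU. unfold gt_prob. f_equal. apply map_ext. intros p.
  now rewrite (teqb_congr_r _ _ (snd p) HTU).
Qed.

Ltac tavare := intros t; unfold g, rise, fall; simpl;
  try replace (- (1 * (1 - 1) / 2) * t) with 0 by field;
  try replace (- ((1 + 1) * (1 + 1 - 1) / 2) * t) with (- t) by field;
  try replace (- ((1 + 1 + 1) * (1 + 1 + 1 - 1) / 2) * t) with (- t + (- t + - t)) by field;
  rewrite ?exp_plus, ?exp_0; field.

Lemma g_1_1 : forall t, g 1 1 t = 1. Proof. tavare. Qed.
Lemma g_2_2 : forall t, g 2 2 t = exp (- t). Proof. tavare. Qed.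
Lemma g_2_1 : forall t, g 2 1 t = 1 - exp (- t). Proof. tavare. Qed.
Lemma g_3_3 : forall t, g 3 3 t = exp (- t) ^ 3. Proof. tavare. Qed.
Lemma g_3_2 : forall t, g 3 2 t = 3/2 * (exp (- t) - exp (- t) ^ 3). Proof. tavare. Qed.
Lemma g_3_1 : forall t, g 3 1 t = 1 - 3/2 * exp (- t) + 1/2 * exp (- t) ^ 3.
Proof. tavare. Qed.

Definition balanced_prob (y e : R) : R :=
  exp (- y) * (1/4 - 1/4 * e + 5/36 * e ^ 2 - 1/36 * e ^ 3).

Definition displayed_prob (y e : R) : R :=
  1/2 - 5/12 * exp (- y) - 1/6 * e
  + exp (- y) * (1/8 * e + 1/36 * e ^ 2 - 1/72 * e ^ 3).

Ltac compute_gt_prob := intros x y;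
  cbv beta iota zeta delta [gt_prob psi_dist root_dist branch bind Defs.split flat_map map
    fold_right length seq pairs merges merge_at remove_at nth app fst snd teqb taxon_eqb
    Nat.sub INR Nat.mul Nat.add andb orb T_ab_cd T_ac_bd D1 D2
    balanced_prob displayed_prob];
  rewrite ?g_1_1, ?g_2_2, ?g_2_1, ?g_3_3, ?g_3_2, ?g_3_1, ?Ropp_0, ?exp_0;
  repeat rewrite ?Rplus_0_l, ?Rplus_0_r, ?Rmult_1_r, ?Rmult_1_l, ?Rmult_0_l, ?Rmult_0_r;
  field.

Lemma gt_prob_T_ab_cd : forall x y,
  gt_prob x y 0 (1/2) T_ab_cd = balanced_prob y (exp (- x)).
Proof. compute_gt_prob. Qed.

Lemma gt_prob_T_ac_bd : forall x y,
  gt_prob x y 0 (1/2) T_ac_bd = balanced_prob y (exp (- x)).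
Proof. compute_gt_prob. Qed.

Lemma gt_prob_D1 : forall x y,
  gt_prob x y 0 (1/2) D1 = displayed_prob y (exp (- x)).
Proof. compute_gt_prob. Qed.

Lemma gt_prob_D2 : forall x y,
  gt_prob x y 0 (1/2) D2 = displayed_prob y (exp (- x)).
Proof. compute_gt_prob. Qed.

Lemma lim_balanced_prob (y : R) (f : R -> R) :
  (forall x, f x = balanced_prob y (exp (- x))) -> lim_infty f (/4 * exp (- y)).
Proof.
  intros Hf. replace (/4 * exp (- y)) with (balanced_prob y 0)
    by (unfold balanced_prob; field).
  apply lim_infty_exp_neg; [unfold balanced_prob; reg | exact Hf].
Qed.

Lemma lim_displayed_prob (y : R) (f : R -> R) :
  (forall x, f x = displayed_prob y (exp (- x))) -> lim_infty f (1/2 - 5/12 * exp (- y)).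
Proof.
  intros Hf. replace (1/2 - 5/12 * exp (- y)) with (displayed_prob y 0)
    by (unfold displayed_prob; field).
  apply lim_infty_exp_neg; [unfold displayed_prob; reg | exact Hf].
Qed.

Lemma balanced_limit_gt_iff (y : R) :
  /4 * exp (- y) > 1/2 - 5/12 * exp (- y) <-> y < ln (4/3).
Proof.
  rewrite lt_ln_iff, exp_Ropp by lra.
  pose proof (exp_pos y) as Hpos.
  pose proof (Rinv_0_lt_compat _ Hpos) as Hinv_pos.
  split; intros H.
  - rewrite <- (Rinv_inv (exp y)). replace (4/3) with (/ (3/4)) by field.
    apply Rinv_lt_contravar; lra.
  - enough (3/4 < / exp y) by lra.
    replace (3/4) with (/ (4/3)) by field.
    apply Rinv_lt_contravar; lra.
Qed.

Lemma gt_prob_displayed (x y : R) (D : gtree) : displayed_by_psi D ->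
  gt_prob x y 0 (1/2) D = gt_prob x y 0 (1/2) D1.
Proof.
  intros [HD | HD]; rewrite (gt_prob_teqb _ _ _ _ _ _ HD); [reflexivity |].
  now rewrite gt_prob_D1, gt_prob_D2.
Qed.

Theorem mainTheorem3 : forall y : R, 0 < y ->
  let P := fun T x => gt_prob x y 0 (1/2) T in
  lim_infty (P T_ab_cd) (/4 * exp (- y)) /\
  lim_infty (P T_ac_bd) (/4 * exp (- y)) /\
  lim_infty (P D1) (1/2 - 5/12 * exp (- y)) /\
  lim_infty (P D2) (1/2 - 5/12 * exp (- y)) /\
  ((/4 * exp (- y) > 1/2 - 5/12 * exp (- y)) <-> y < ln (4/3)) /\
  (y < ln (4/3) ->
     exists M, forall x, x > M ->
       forall D, displayed_by_psi D -> exists T, P T x > P D x).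
Proof.
  intros y _ P.
  assert (Hab_cd : lim_infty (P T_ab_cd) (/4 * exp (- y)))
    by (apply lim_balanced_prob; intros x; exact (gt_prob_T_ab_cd x y)).
  assert (HD1 : lim_infty (P D1) (1/2 - 5/12 * exp (- y)))
    by (apply lim_displayed_prob; intros x; exact (gt_prob_D1 x y)).
  split; [exact Hab_cd |].
  split; [apply lim_balanced_prob; intros x; exact (gt_prob_T_ac_bd x y) |].
  split; [exact HD1 |].
  split; [apply lim_displayed_prob; intros x; exact (gt_prob_D2 x y) |].
  split; [exact (balanced_limit_gt_iff y) |].
  intros Hy.
  apply balanced_limit_gt_iff in Hy.
  destruct (lim_infty_eventually_lt _ _ _ _ Hab_cd HD1 Hy) as [M HM].
  exists M. intros x Hx D HD. exists T_ab_cd.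
  unfold P. rewrite (gt_prob_displayed x y D HD). exact (HM x Hx).
Qed.
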